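(* For every graph $G$ and every positive integer $t$, $\partial\Gamma(G)\ge t$ if and only if $G$ contains an induced subgraph which is a minimal pG-$t$-atom.
   Context: A proper $k$-coloring of $G$ is a surjective map $c:V(G)\to\{1,\ldots,k\}$ with $c(u)\ne c(v)$ for every edge $uv$. A vertex of color $i$ is a Grundy vertex if it has, for every $j<i$, a neighbor of color $j$. A partial Grundy $k$-coloring is a proper $k$-coloring in which every color class contains at least one Grundy vertex; $\partial\Gamma(G)$ is the largest $k$ such that $G$ has a partial Grundy $k$-coloring. A pG-$t$-atom is a graph $A$ whose vertex set can be partitioned into $t$ sets $D_1,\ldots,D_t$, where each $D_i$ contains a special vertex $c_i$, such that: each $D_i$ is an independent set with $|D_i|\le t-i+1$; and for all $i\in\{2,\ldots,t\}$, $c_i$ has a neighbor in each of $D_1,\ldots,D_{i-1}$. A pG-$t$-atom is minimal if no proper induced subgraph of it is a pG-$t$-atom. *)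

(* A finite simple graph is a symmetric irreflexive relation
   e : rel T on a finType T. Colors {1..k} are represented by 'I_k
   (color i+1 of the paper is the ordinal i). *)
From HB Require Import structures.
From mathcomp Require Import all_boot.
Set Implicit Arguments. Unset Strict Implicit. Unset Printing Implicit Defensive.

Section Defs.
Variables (T : finType) (e : rel T).

Definition proper_coloring (k : nat) (c : T -> 'I_k) : bool :=
  [forall i : 'I_k, exists v, c v == i] &&
  [forall u, forall v, e u v ==> (c u != c v)].

Definition grundy_vertex (k : nat) (c : T -> 'I_k) (v : T) : bool :=
  [forall j : 'I_k, (j < c v) ==> [exists u, e v u && (c u == j)]].

Definition partial_grundy_coloring (k : nat) (c : T -> 'I_k) : bool :=
  proper_coloring c &&
  [forall i : 'I_k, exists v, (c v == i) && grundy_vertex c v].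

Definition has_pG_coloring (k : nat) : bool :=
  [exists c : {ffun T -> 'I_k}, partial_grundy_coloring c].

(* the partial Grundy number: largest k admitting a partial Grundy k-coloring
   (any such k is at most #|T| by surjectivity) *)
Definition partial_grundy_number : nat :=
  \max_(k < #|T|.+1 | has_pG_coloring k) k.

(* The induced subgraph G[S] is a pG-t-atom. Classes are indexed 0..t-1,
   class i (0-based) = D_{i+1}; bound |D_{i+1}| <= t-(i+1)+1 = t - i. *)
Definition pG_atom (t : nat) (S : {set T}) : Prop :=
  exists (d : T -> 'I_t) (cs : 'I_t -> T),
    [/\ (forall i, cs i \in S /\ d (cs i) = i),
        (forall x y, x \in S -> y \in S -> d x = d y -> ~~ e x y),
        (forall i : 'I_t, #|[set x in S | d x == i]| <= t - i) &
        (forall i j : 'I_t, j < i ->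
           exists y, [/\ y \in S, d y = j & e (cs i) y])].

Definition minimal_pG_atom (t : nat) (S : {set T}) : Prop :=
  pG_atom t S /\ (forall S' : {set T}, S' \proper S -> ~ pG_atom t S').

End Defs.

From HB Require Import structures.
From mathcomp Require Import all_boot zify.
From Stdlib Require Import Classical.
Set Implicit Arguments. Unset Strict Implicit. Unset Printing Implicit Defensive.

(* A partial Grundy coloring with at least t colors yields an atom: the
   Grundy vertices of the first t colors, together with one neighbour of each
   of them in every smaller color; class j then holds at most 1 + (t - j - 1)
   vertices.  Shrinking an atom as long as possible gives a minimal one.
   Conversely, extend the atom's partition to a proper coloring of the whole
   graph and lower colors greedily (minimise the color sum) while keeping the
   atom fixed: every vertex outside the atom becomes Grundy, the vertices c_i
   are Grundy by the atom axioms, and the colors used form an initial segment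
   of at least t colors. *)

Lemma card_ord_gt t (j : 'I_t) : #|[set i : 'I_t | j < i]| = t - j.+1.
Proof.
rewrite -sum1_card (eq_bigl (fun i : 'I_t => j < i)) => [|i]; last by rewrite inE.
rewrite -(big_mkord (fun i => j < i) (fun _ => 1)).
rewrite (@big_cat_nat _ _ _ j.+1 0 t _ _ (leq0n _) (ltn_ord j)) /=.
rewrite big_nat_cond big1 => [|i /andP[/andP[_ ij] ji]]; last by move: ij ji; lia.
rewrite add0n big_nat_cond (eq_bigl (fun i => j.+1 <= i < t)) => [|i].
  by rewrite -big_nat sum1_size size_iota.
by rewrite andbAC andbb.
Qed.

Section PartialGrundy.
Variables (T : finType) (e : rel T).

Lemma has_pG_coloring_le_card k : has_pG_coloring e k -> k <= #|T|.
Proof.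
case/existsP=> c /andP[/andP[/forallP c_surj _] _].
have /fin_all_exists[v cv] : forall i : 'I_k, exists x, c x = i.
  by move=> i; have /existsP[x /eqP cx] := c_surj i; exists x.
have v_inj : injective v by move=> i j vij; rewrite -[i]cv -[j]cv vij.
by rewrite -(card_ord k) -(card_image v_inj) max_card.
Qed.

Lemma partial_grundy_numberP t : 0 < t ->
  t <= partial_grundy_number e <-> exists2 k, t <= k & has_pG_coloring e k.
Proof.
move=> t_pos; split=> [t_le | [k t_le_k col_k]].
  case: (boolP [exists k : 'I_#|T|.+1, has_pG_coloring e k && (t <= k)]).
    by case/existsP=> k /andP[col_k t_le_k]; exists k.
  move/existsPn=> no_k; exfalso; move: t_le; apply/negP; rewrite -ltnNge.
  case: t t_pos no_k => // t _ no_k; rewrite ltnS.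
  apply/bigmax_leqP=> k col_k; rewrite leqNgt; apply: contra (no_k k) => t_lt_k.
  by rewrite col_k.
have k_lt : k < #|T|.+1 by rewrite ltnS has_pG_coloring_le_card.
apply: (leq_trans t_le_k).
exact: (@leq_bigmax_cond _ _ (fun k : 'I_#|T|.+1 => val k) (Ordinal k_lt)).
Qed.

Section AtomOfColoring.
Variables (k t : nat) (c : T -> 'I_k) (t_le_k : t <= k) (t_pos : 0 < t).
Variables (rep : 'I_t -> T) (nb : 'I_t -> 'I_t -> T).
Hypotheses (c_proper : forall u v, e u v -> c u != c v)
  (rep_col : forall i, c (rep i) = widen_ord t_le_k i)
  (nb_adj : forall i j : 'I_t, j < i -> e (rep i) (nb i j))
  (nb_col : forall i j : 'I_t, j < i -> c (nb i j) = widen_ord t_le_k j).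

Definition atom_of_coloring : {set T} :=
  [set rep i | i : 'I_t] :|: [set nb i j | i in 'I_t, j in 'I_t & j < i].

(* Colors >= t never occur in the atom; [insubd] sends them to 0. *)
Let class_of (x : T) : 'I_t := insubd (Ordinal t_pos) (val (c x)).

Lemma atom_of_coloringP x : x \in atom_of_coloring ->
  exists j, c x = widen_ord t_le_k j /\ (x = rep j \/ exists2 i : 'I_t, j < i & x = nb i j).
Proof.
case/setUP=> [/imsetP[j _ ->] | /imset2P[i j _]].
  by exists j; split; [exact: rep_col | left].
by rewrite inE => ji ->; exists j; split; [exact: nb_col | right; exists i].
Qed.

Lemma class_of_widen x j : c x = widen_ord t_le_k j -> class_of x = j.
Proof. by move=> cx; apply: val_inj; rewrite /class_of cx insubdK //; exact: (ltn_ord j). Qed.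

Lemma pG_atom_of_coloring : pG_atom e t atom_of_coloring.
Proof.
have col_class x : x \in atom_of_coloring -> c x = widen_ord t_le_k (class_of x).
  by case/atom_of_coloringP=> j [cx _]; rewrite (class_of_widen cx).
exists class_of, rep; split.
- move=> i; split; last exact: class_of_widen.
  by rewrite inE imset_f.
- move=> x y /col_class cx /col_class cy dxy; apply/negP=> /c_proper.
  by rewrite cx cy dxy eqxx.
- move=> j; set Dj := [set x in _ | _].
  have Dj_sub : Dj \subset rep j |: nb^~ j @: [set i : 'I_t | j < i].
    apply/subsetP=> x; rewrite inE => /andP[/atom_of_coloringP[i [cx rep_nb]]].
    rewrite (class_of_widen cx) => /eqP ij; subst i; rewrite !inE.
    case: rep_nb => [-> | [i ji ->]]; first by rewrite eqxx.
    by apply/orP; right; apply/imsetP; exists i; rewrite ?inE.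
  apply: (leq_trans (subset_leq_card Dj_sub)); rewrite cardsU1.
  have := leq_imset_card (nb^~ j) [set i : 'I_t | j < i].
  by rewrite card_ord_gt; move: (ltn_ord j); lia.
- move=> i j ji; exists (nb i j); split; last exact: nb_adj.
    by rewrite inE; apply/orP; right; apply/imset2P; exists i j; rewrite ?inE.
  exact/class_of_widen/nb_col.
Qed.

End AtomOfColoring.

Lemma pG_atom_of_pG_coloring k t (c : T -> 'I_k) :
  partial_grundy_coloring e c -> t <= k -> 0 < t -> exists S, pG_atom e t S.
Proof.
case/andP=> /andP[_ /forallP c_proper] /forallP c_grundy t_le_k t_pos.
pose w (i : 'I_t) := widen_ord t_le_k i.
have /fin_all_exists[rep rep_P] :
    forall i, exists v, c v = w i /\ grundy_vertex e c v.
  by move=> i; have /existsP[v /andP[/eqP cv gv]] := c_grundy (w i); exists v.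
have /fin_all_exists[nb nb_P] : forall i : 'I_t, exists nb_i : 'I_t -> T,
    forall j : 'I_t, j < i -> e (rep i) (nb_i j) /\ c (nb_i j) = w j.
  move=> i; suff /fin_all_exists : forall j : 'I_t, exists y,
    j < i -> e (rep i) y /\ c y = w j by [].
  move=> j; have [ji | _] := ltnP j i; last by exists (rep i).
  have [cr /forallP/(_ (w j))] := rep_P i; rewrite cr /= ji.
  by case/existsP=> y /andP[ey /eqP cy]; exists y.
exists (atom_of_coloring rep nb).
apply: (@pG_atom_of_coloring _ _ c t_le_k t_pos).
- by move=> u v euv; move/forallP: (c_proper u) => /(_ v); rewrite euv.
- by move=> i; case: (rep_P i).
- by move=> i j /(nb_P i j)[].
- by move=> i j /(nb_P i j)[].
Qed.

Lemma exists_minimal_pG_atom t S : pG_atom e t S -> exists S', minimal_pG_atom e t S'.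
Proof.
elim: {S}_.+1 {-2}S (ltnSn #|S|) => // n IH S ltSn atomS.
have [[S' ltS' atomS'] | noS'] :=
  classic (exists2 S' : {set T}, S' \proper S & pG_atom e t S').
  by apply: (IH S') => //; apply: leq_trans (proper_card ltS') _.
by exists S; split=> // S' ltS' atomS'; apply: noS'; exists S'.
Qed.

Definition proper_nat (col : T -> nat) := forall u v, e u v -> col u != col v.

Definition grundy_nat (col : T -> nat) (v : T) :=
  forall j, j < col v -> exists2 u, e v u & col u = j.

Lemma has_pG_coloring_of_nat k (col : T -> nat) (col_lt : forall v, col v < k) :
    proper_nat col -> (forall i, i < k -> exists2 v, col v = i & grundy_nat col v) ->
  has_pG_coloring e k.
Proof.
move=> col_proper col_grundy; pose c := [ffun v => Ordinal (col_lt v)].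
have cE v : (c v : nat) = col v by rewrite ffunE.
apply/existsP; exists c; apply/andP; split; first (apply/andP; split).
- apply/forallP=> i; have [v cv _] := col_grundy i (ltn_ord i).
  by apply/existsP; exists v; rewrite -val_eqE /= cE cv.
- apply/forallP=> u; apply/forallP=> v; apply/implyP=> /col_proper.
  by rewrite -val_eqE /= !cE.
apply/forallP=> i; have [v cv v_grundy] := col_grundy i (ltn_ord i).
apply/existsP; exists v; rewrite -val_eqE /= cE cv eqxx /=.
apply/forallP=> j; apply/implyP; rewrite cE cv => ji.
have [|u evu cu] := v_grundy j; first by rewrite cv.
by apply/existsP; exists u; rewrite evu -val_eqE /= cE cu.
Qed.

Hypotheses (e_sym : symmetric e) (e_irr : irreflexive e).

Lemma proper_nat_recolor col v j : proper_nat col ->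
  (forall u, e v u -> col u != j) -> proper_nat [eta col with v |-> j].
Proof.
move=> col_proper v_free x y exy /=.
have [xv | xv] := eqVneq x v; have [yv | yv] := eqVneq y v.
- by move: exy; rewrite xv yv e_irr.
- by rewrite eq_sym v_free // -xv.
- by rewrite v_free // -yv e_sym.
- exact: col_proper.
Qed.

Lemma sum_recolor col v j :
  j < col v -> \sum_(x : T) [eta col with v |-> j] x < \sum_(x : T) col x.
Proof.
move=> j_lt; rewrite (bigD1 v) // [X in _ < X](bigD1 v) //= eqxx.
by rewrite (eq_bigr col) => [|x /negbTE -> //]; rewrite ltn_add2r.
Qed.

Section GrundyExtension.
Variables (S : {set T}) (d : T -> nat).
Hypothesis d_proper : forall u v, u \in S -> v \in S -> e u v -> d u != d v.

Lemma exists_proper_extension : exists col, proper_nat col /\ {in S, col =1 d}.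
Proof.
pose col v := if v \in S then d v else (\max_x d x).+1 + enum_rank v.
exists col; split=> [u v euv | v vS]; last by rewrite /col vS.
rewrite /col; case: ifP => uS; case: ifP => vS.
- exact: d_proper.
- by have := @leq_bigmax _ d u; lia.
- by have := @leq_bigmax _ d v; lia.
rewrite eqn_add2l; apply: contraTneq euv => /val_inj/enum_rank_inj ->.
by rewrite e_irr.
Qed.

(* Induction on the color sum: a vertex outside S that misses a smaller color
   among its neighbours is recolored with it. *)
Lemma grundy_extension : exists col,
  [/\ proper_nat col, {in S, col =1 d} & forall v, v \notin S -> grundy_nat col v].
Proof.
have [col0 [proper0 ext0]] := exists_proper_extension.
elim: {col0}_.+1 {-2}col0 (ltnSn (\sum_x col0 x)) proper0 ext0 => // n IH col.
move=> sum_lt col_proper col_ext.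
have [[v [j [vS j_lt v_free]]] | no_recolor] :=
  classic (exists v j, [/\ v \notin S, j < col v & forall u, e v u -> col u != j]).
  apply: (IH [eta col with v |-> j]).
  - exact: leq_trans (sum_recolor j_lt) _.
  - exact: proper_nat_recolor.
  - move=> x xS /=; have xv : x != v by apply: contraNneq vS => <-.
    by rewrite (negbTE xv) col_ext.
exists col; split=> // v vS j j_lt; apply: NNPP => no_u.
apply: no_recolor; exists v, j; split=> // u evu; apply/eqP=> cu.
by apply: no_u; exists u.
Qed.

End GrundyExtension.

Lemma pG_coloring_of_pG_atom t S :
  pG_atom e t S -> exists2 k, t <= k & has_pG_coloring e k.
Proof.
case=> d [cs [cs_S d_indep _ cs_nb]].
have [|col [col_proper col_S col_grundy]] := @grundy_extension S (fun x => val (d x)).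
  by move=> u v uS vS; apply: contraTneq => /val_inj/(d_indep u v uS vS).
have col_cs i : col (cs i) = i by have [csS dcs] := cs_S i; rewrite col_S // dcs.
have high_grundy v : t <= col v -> grundy_nat col v.
  move=> tv; apply: col_grundy; apply: contraTN tv => vS.
  by rewrite -ltnNge col_S //; apply: ltn_ord.
pose k := \max_v (col v).+1.
have col_lt v : col v < k := @leq_bigmax _ (fun v => (col v).+1) v.
exists k.
  have [//|k_lt_t] := leqP t k.
  by have := col_lt (cs (Ordinal k_lt_t)); rewrite col_cs ltnn.
apply: (has_pG_coloring_of_nat col_lt col_proper) => i i_lt_k.
have [i_lt_t | t_le_i] := ltnP i t.
  exists (cs (Ordinal i_lt_t)); first exact: col_cs.
  move=> j; rewrite col_cs => j_lt_i.
  have [y [yS dy ey]] := cs_nb (Ordinal i_lt_t) (Ordinal (ltn_trans j_lt_i i_lt_t)) j_lt_i.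
  by exists y; rewrite // col_S // dy.
have [w i_le_w] : exists w, i <= col w.
  case: (boolP [exists w, i <= col w]) => [/existsP[w] | /existsPn no_w]; first by exists w.
  move: i_lt_k; rewrite ltnNge => /negP[]; apply/bigmax_leqP=> w _.
  by rewrite ltnNge no_w.
move: i_le_w; rewrite leq_eqVlt => /orP[/eqP i_w | i_lt_w].
  by exists w => //; apply: high_grundy; rewrite -i_w.
have [u _ cu] := high_grundy w (leq_trans t_le_i (ltnW i_lt_w)) i i_lt_w.
by exists u => //; apply: high_grundy; rewrite cu.
Qed.

End PartialGrundy.

Theorem mainTheorem2 (T : finType) (e : rel T)
  (e_sym : symmetric e) (e_irr : irreflexive e) (t : nat) (t_pos : 0 < t) :
  t <= partial_grundy_number e <-> exists S : {set T}, minimal_pG_atom e t S.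
Proof.
rewrite partial_grundy_numberP //.
split=> [[k t_le_k /existsP[c c_pG]] | [S [atomS _]]].
  have [S atomS] := pG_atom_of_pG_coloring c_pG t_le_k t_pos.
  exact: exists_minimal_pG_atom atomS.
exact: (pG_coloring_of_pG_atom e_sym e_irr atomS).
Qed.
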